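(* Let $E=(C,V)$ be an approval-based election and let $S\subsetneq C$ be a winning committee under the $t_{\mathrm{maj}}$-Threshold rule with $|S|$ odd. Then for every candidate $c\in C\setminus S$, the committee $S\cup\{c\}$ is also a winning committee under the $t_{\mathrm{maj}}$-Threshold rule.
   Context: An approval-based election $E=(C,V)$ consists of a finite set $C$ of candidates and a list $V=(v_1,\dots,v_n)$ of voters, each identified with its approval ballot $v_i\subseteq C$. Under the $t_{\mathrm{maj}}$-Threshold rule, a voter $v_i$ approves a committee $S\subseteq C$ if $|S\cap v_i|\ge |S|/2$, and the rule outputs (as winning committees) all committees $S\subseteq C$ approved by the largest number of voters. *)

From mathcomp Require Import all_boot.
Set Implicit Arguments. Unset Strict Implicit. Unset Printing Implicit Defensive.

(* An election: candidates are the elements of a finite type C;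
   voters are a list of approval ballots (subsets of C). *)

(* t_maj threshold: voter v approves committee S iff |S ∩ v| >= |S|/2,
   written without division as |S| <= 2 |S ∩ v|. *)
Definition tmaj_approves (C : finType) (v : {set C}) (S : {set C}) : bool :=
  #|S| <= 2 * #|S :&: v|.

Definition tmaj_score (C : finType) (V : seq {set C}) (S : {set C}) : nat :=
  count (fun v => tmaj_approves v S) V.

Definition tmaj_winning (C : finType) (V : seq {set C}) (S : {set C}) : Prop :=
  forall S' : {set C}, tmaj_score V S' <= tmaj_score V S.

(* When |S| is odd, a voter approving S has |S| < 2|S ∩ v|, hence
   |S| + 1 <= 2|S ∩ v| <= 2|(c ∪ S) ∩ v|: every supporter of S supports
   S ∪ {c}. The score of S ∪ {c} is then at least the maximal score of S. *)
From mathcomp Require Import all_boot.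

Set Implicit Arguments.
Unset Strict Implicit.
Unset Printing Implicit Defensive.

Lemma tmaj_approves_setU1 (C : finType) (v S : {set C}) (c : C) :
  odd #|S| -> tmaj_approves v S -> tmaj_approves v (c |: S).
Proof.
move=> oddS; rewrite /tmaj_approves => appS.
have ltS : #|S| < 2 * #|S :&: v|.
  by rewrite ltn_neqAle appS andbT; apply: contraTneq oddS => ->; rewrite oddM.
have subI : #|S :&: v| <= #|(c |: S) :&: v|.
  by apply/subset_leq_card/setSI/subsetUr.
apply: leq_trans (leq_mul (leqnn 2) subI).
by rewrite cardsU1 addnC; apply: leq_trans ltS; rewrite -addn1 leq_add2l leq_b1.
Qed.

Lemma tmaj_score_setU1 (C : finType) (V : seq {set C}) (S : {set C}) (c : C) :
  odd #|S| -> tmaj_score V S <= tmaj_score V (c |: S).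
Proof. by move=> oddS; apply: sub_count => v; apply: tmaj_approves_setU1. Qed.

Theorem mainTheorem12 (C : finType) (V : seq {set C}) (S : {set C}) :
  S \proper [set: C] ->
  tmaj_winning V S ->
  odd #|S| ->
  forall c : C, c \notin S -> tmaj_winning V (c |: S).
Proof.
move=> _ winS oddS c _ S'.
exact: leq_trans (winS S') (tmaj_score_setU1 V c oddS).
Qed.
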